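(* Let $f_1,f_2,\ldots,f_{KN}$ be drawn i.i.d. from a distribution $\mathcal{F}$ over types, and for $i\in[K]$ let $\widehat{p}(\mathbf{b}^{(i)})=\frac1N\sum_{\tau=1}^N\mathbb{1}\{b_{f_{(i-1)N+\tau}}(\mathbf{x}^{(\mathbf{b}^{(i)})})=a^{(\mathbf{b}^{(i)})}\}$ (so the estimates for different $i$ use disjoint rounds). For $\mathbf{w}\in\mathcal{W}$ define $\widehat{p}(\mathbf{w})=\sum_{i=1}^K\lambda_i(\mathbf{w})\widehat{p}(\mathbf{b}^{(i)})$. Then for every $\sigma\in\Sigma$ and $a_f\in\mathcal{A}_f$, $\mathrm{Var}\big(\widehat{p}(\mathbb{1}_{(\sigma=a_f)})\big)\le\frac{K}{N}$.
   Context: Finite leader actions $\mathcal{A}$, finite follower actions $\mathcal{A}_f$, follower types $\alpha^{(1)},\ldots,\alpha^{(K)}$ with context-independent utilities $u_{\alpha^{(i)}}:\mathcal{A}\times\mathcal{A}_f\to[0,1]$; for $\mathbf{x}\in\Delta(\mathcal{A})$, $b_f(\mathbf{x})\in\arg\max_{a_f}\sum_{a_l}\mathbf{x}[a_l]u_f(a_l,a_f)$, ties broken by a fixed ordering. $\sigma^{(\mathbf{x})}$ maps $\alpha^{(i)}\mapsto b_{\alpha^{(i)}}(\mathbf{x})$, $\Sigma=\{\sigma^{(\mathbf{x})}:\mathbf{x}\in\Delta(\mathcal{A})\}$. For $\sigma\in\Sigma$, $a_f\in\mathcal{A}_f$, $\mathbb{1}_{(\sigma=a_f)}\in\{0,1\}^K$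 has $i$-th entry $\mathbb{1}\{\sigma(\alpha^{(i)})=a_f\}$, and $\mathcal{W}$ is the set of all such vectors. $\mathcal{B}=\{\mathbf{b}^{(1)},\ldots,\mathbf{b}^{(K)}\}\subseteq\mathcal{W}$ is a barycentric spanner: each $\mathbf{w}\in\mathcal{W}$ equals $\sum_i\lambda_i(\mathbf{w})\mathbf{b}^{(i)}$ with $\lambda_i(\mathbf{w})\in[-1,1]$. For each $\mathbf{b}\in\mathcal{B}$, $\mathbf{x}^{(\mathbf{b})}$, $a^{(\mathbf{b})}$ satisfy $\mathbf{b}=\mathbb{1}_{(\sigma^{(\mathbf{x}^{(\mathbf{b})})}=a^{(\mathbf{b})})}$. *)

From mathcomp Require Import all_boot all_order all_algebra.
Set Implicit Arguments. Unset Strict Implicit. Unset Printing Implicit Defensive.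
Import Order.TTheory GRing.Theory Num.Theory.
Local Open Scope ring_scope.

Section Game.
Variables (R : realFieldType) (AL AF : finType) (K : nat).

Definition in_simplex (x : {ffun AL -> R}) : Prop :=
  (forall a, 0 <= x a) /\ \sum_a x a = 1.

Definition expU (uf : AL -> AF -> R) (x : {ffun AL -> R}) (af : AF) : R :=
  \sum_al x al * uf al af.

Definition is_br (uf : AL -> AF -> R) (x : {ffun AL -> R}) (af : AF) : bool :=
  [forall af', expU uf x af' <= expU uf x af].

(* best response b_f(x): the first maximiser in the fixed ordering enum AF
   (a0 is only a dummy default, never used since a maximiser always exists) *)
Definition br (a0 : AF) (uf : AL -> AF -> R) (x : {ffun AL -> R}) : AF :=
  nth a0 [seq af <- enum AF | is_br uf x af] 0.

Definition sigma_of (a0 : AF) (u : 'I_K -> AL -> AF -> R) (x : {ffun AL -> R})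
  : {ffun 'I_K -> AF} := [ffun i => br a0 (u i) x].

Definition in_Sigma a0 u (s : {ffun 'I_K -> AF}) : Prop :=
  exists x, in_simplex x /\ s = sigma_of a0 u x.

Definition indv (s : {ffun 'I_K -> AF}) (af : AF) : {ffun 'I_K -> R} :=
  [ffun i => (s i == af)%:R].

Definition in_W a0 u (w : {ffun 'I_K -> R}) : Prop :=
  exists s af, in_Sigma a0 u s /\ w = indv s af.

Definition barycentric_spanner a0 u (b : 'I_K -> {ffun 'I_K -> R})
  (lam : {ffun 'I_K -> R} -> 'I_K -> R) : Prop :=
  (forall i, in_W a0 u (b i)) /\
  forall w, in_W a0 u w ->
    (forall i, -1 <= lam w i <= 1) /\ (forall j, w j = \sum_i lam w i * b i j).

Definition prob_vec (p : 'I_K -> R) : Prop :=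
  (forall i, 0 <= p i) /\ \sum_i p i = 1.

(* i.i.d. sampling of M follower types: sample space {ffun 'I_M -> 'I_K} *)
Definition weight (M : nat) (p : 'I_K -> R) (s : {ffun 'I_M -> 'I_K}) : R :=
  \prod_t p (s t).

Definition Expect (M : nat) (p : 'I_K -> R) (X : {ffun 'I_M -> 'I_K} -> R) : R :=
  \sum_s weight p s * X s.

Definition Var (M : nat) (p : 'I_K -> R) (X : {ffun 'I_M -> 'I_K} -> R) : R :=
  Expect p (fun s => (X s - Expect p X) ^+ 2).

(* hat p(b^(i)) computed from rounds i*N, ..., i*N + N - 1 (0-indexed) *)
Definition phat_b a0 (u : 'I_K -> AL -> AF -> R) (xb : 'I_K -> {ffun AL -> R})
  (ab : 'I_K -> AF) (N : nat) (i : 'I_K) (s : {ffun 'I_(K * N) -> 'I_K}) : R :=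
  N%:R^-1 * \sum_(t : 'I_(K * N) | (t %/ N)%N == val i)
              (br a0 (u (s t)) (xb i) == ab i)%:R.

Definition phat a0 u xb ab N (lam : {ffun 'I_K -> R} -> 'I_K -> R)
  (w : {ffun 'I_K -> R}) (s : {ffun 'I_(K * N) -> 'I_K}) : R :=
  \sum_i lam w i * @phat_b a0 u xb ab N i s.

End Game.

Arguments indv {R AF K} s af.
Arguments phat {R AL AF K} a0 u xb ab N lam w s.

(** The estimate is an average of [K * N] independent rounds, round [t]
    contributing [lam_i(w) / N] times a 0/1 indicator, where [i] is the block
    of [t].  Variances of independent terms add (Bienaymé), and each term has
    variance at most its second moment [lam_i(w)^2 / N^2 <= 1 / N^2]; summing
    over the [K * N] rounds gives [K / N]. *)
From mathcomp Require Import all_boot all_order all_algebra.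
From mathcomp Require Import ring lra.
Import Order.TTheory GRing.Theory Num.Theory.
Local Open Scope ring_scope.

Lemma big_only2 {R : Type} {idx : R} {op : Monoid.com_law idx} {I : finType}
    {i j : I} {F : I -> R} :
  i != j -> (forall k, k != i -> k != j -> F k = idx) ->
  \big[op/idx]_k F k = op (F i) (F j).
Proof.
move=> ij F1; rewrite (bigD1 i) //= (bigD1 j) 1?eq_sym //= big1 ?Monoid.mulm1 //.
by move=> k /andP[? ?]; apply: F1.
Qed.

Section ProductProbability.
Context {R : realFieldType} {K M : nat} (p : 'I_K -> R).

Definition mean (f : 'I_K -> R) : R := \sum_k p k * f k.

Definition variance (f : 'I_K -> R) : R := mean (fun k => (f k - mean f) ^+ 2).

Lemma eq_Expect {X Y : {ffun 'I_M -> 'I_K} -> R} :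
  X =1 Y -> Expect p X = Expect p Y.
Proof. by move=> eqXY; apply: eq_bigr => s _; rewrite eqXY. Qed.

Lemma eq_Var {X Y : {ffun 'I_M -> 'I_K} -> R} : X =1 Y -> Var p X = Var p Y.
Proof.
by move=> eqXY; rewrite /Var (eq_Expect eqXY); apply: eq_Expect => s; rewrite eqXY.
Qed.

Lemma Expect_sum (I : finType) (F : I -> {ffun 'I_M -> 'I_K} -> R) :
  Expect p (fun s => \sum_j F j s) = \sum_j Expect p (F j).
Proof.
rewrite /Expect -exchange_big; apply: eq_bigr => s _.
by rewrite mulr_sumr.
Qed.

Lemma Expect_prod (q : 'I_M -> 'I_K -> R) :
  Expect p (fun s => \prod_t q t (s t)) = \prod_t mean (q t).
Proof.
rewrite bigA_distr_bigA; apply: eq_bigr => s _.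
by rewrite /weight -big_split.
Qed.

Hypothesis hp : prob_vec p.

Lemma mean_cst (c : R) : mean (fun=> c) = c.
Proof. by rewrite /mean -mulr_suml hp.2 mul1r. Qed.

Lemma ler_mean (f g : 'I_K -> R) : (forall k, f k <= g k) -> mean f <= mean g.
Proof. by move=> fg; apply: ler_sum => k _; rewrite ler_wpM2l ?hp.1. Qed.

Lemma mean_centered (f : 'I_K -> R) : mean (fun k => f k - mean f) = 0.
Proof.
rewrite {1}/mean (eq_bigr (fun k => p k * f k - mean f * p k)); last first.
  by move=> k _; ring.
by rewrite sumrB -mulr_sumr hp.2 mulr1 subrr.
Qed.

Lemma varianceE (f : 'I_K -> R) :
  variance f = mean (fun k => f k ^+ 2) - mean f ^+ 2.
Proof.
rewrite /variance {1}/mean.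
rewrite (eq_bigr (fun k => p k * f k ^+ 2 - (mean f *+ 2) * (p k * f k)
                             + mean f ^+ 2 * p k)); last by move=> k _; ring.
rewrite big_split sumrB /= -!mulr_sumr hp.2 -/(mean f).
by rewrite -/(mean (fun k => f k ^+ 2)); ring.
Qed.

Lemma variance_le (f : 'I_K -> R) (C : R) :
  (forall k, f k ^+ 2 <= C) -> variance f <= C.
Proof.
move=> fC; rewrite varianceE.
apply: le_trans (_ : mean (fun k => f k ^+ 2) <= _); first by rewrite gerBl sqr_ge0.
by rewrite -[C]mean_cst; apply: ler_mean.
Qed.

Lemma Expect_coord (t : 'I_M) (f : 'I_K -> R) :
  Expect p (fun s => f (s t)) = mean f.
Proof.
pose q τ := if τ == t then f else fun=> 1.
have := Expect_prod q; rewrite (big_only1 t) //; last first.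
  by move=> τ /negbTE τt _; rewrite /q τt mean_cst.
rewrite /q eqxx => <-; apply: eq_Expect => s.
by rewrite (big_only1 t) ?eqxx // => τ /negbTE -> _.
Qed.

Lemma Expect_coord2 (t t' : 'I_M) (f g : 'I_K -> R) : t != t' ->
  Expect p (fun s => f (s t) * g (s t')) = mean f * mean g.
Proof.
move=> tt'; pose q τ := if τ == t then f else if τ == t' then g else fun=> 1.
have q1 τ : τ != t -> τ != t' -> q τ = fun=> 1.
  by move=> /negbTE τt /negbTE τt'; rewrite /q τt τt'.
have := Expect_prod q; rewrite (big_only2 tt'); last first.
  by move=> τ τt τt'; rewrite q1 // mean_cst.
rewrite /q eqxx eq_sym (negbTE tt') eqxx => <-; apply: eq_Expect => s.
rewrite (big_only2 tt') /q ?eqxx 1?eq_sym ?(negbTE tt') // => τ τt τt'.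
by rewrite -/(q τ) q1.
Qed.

Lemma Var_sum_coord (F : 'I_M -> 'I_K -> R) :
  Var p (fun s => \sum_t F t (s t)) = \sum_t variance (F t).
Proof.
pose D t k := F t k - mean (F t).
have ED : Expect p (fun s => \sum_t F t (s t)) = \sum_t mean (F t).
  by rewrite Expect_sum; apply: eq_bigr => t _; rewrite Expect_coord.
rewrite /Var ED (@eq_Expect _ (fun s => \sum_t \sum_t' D t (s t) * D t' (s t'))).
  rewrite Expect_sum; apply: eq_bigr => t _.
  rewrite Expect_sum (bigD1 t) //= big1 ?addr0 => [|t' t't].
    rewrite (Expect_coord t (fun k => D t k * D t k)).
    by apply: eq_bigr => k _; rewrite expr2.
  by rewrite (Expect_coord2 _ _ (D t) (D t')) 1?eq_sym // mean_centered mul0r.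
move=> s; rewrite -sumrB expr2 mulr_suml; apply: eq_bigr => t _.
by rewrite mulr_sumr.
Qed.

End ProductProbability.

Section Blocks.
Context {K N : nat} (hN : (0 < N)%N).

Lemma block_subproof (t : 'I_(K * N)) : (t %/ N < K)%N.
Proof. by rewrite ltn_divLR. Qed.

Definition block (t : 'I_(K * N)) : 'I_K := Ordinal (block_subproof t).

Lemma sum_by_block (R : nmodType) (F : 'I_K -> 'I_(K * N) -> R) :
  \sum_(i < K) \sum_(t < K * N | (t %/ N)%N == i) F i t = \sum_t F (block t) t.
Proof.
under eq_bigr => i _ do rewrite big_mkcond.
rewrite exchange_big; apply: eq_bigr => t _.
by rewrite -big_mkcond (big_pred1 (block t)) // => i; rewrite eq_sym.
Qed.

Context {R : realFieldType} {AL AF : finType} (a0 : AF)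
  (u : 'I_K -> AL -> AF -> R) (xb : 'I_K -> {ffun AL -> R}) (ab : 'I_K -> AF)
  (lam : {ffun 'I_K -> R} -> 'I_K -> R) (w : {ffun 'I_K -> R}).

Definition round_term (t : 'I_(K * N)) (k : 'I_K) : R :=
  lam w (block t) / N%:R * (br a0 (u k) (xb (block t)) == ab (block t))%:R.

Lemma round_term_sqr_le t k :
  -1 <= lam w (block t) <= 1 -> round_term t k ^+ 2 <= N%:R ^- 2.
Proof.
move=> /andP[lo hi]; rewrite /round_term !exprMn exprVn mulrAC.
rewrite -[X in _ <= X]mul1r ler_wpM2r ?invr_ge0 ?exprn_ge0 ?ler0n //.
rewrite mulr_ile1 ?sqr_ge0 //; first by nra.
by case: (_ == _); rewrite ?expr0n ?expr1n.
Qed.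

Lemma phat_by_round s :
  phat a0 u xb ab N lam w s = \sum_t round_term t (s t).
Proof.
rewrite /phat; under eq_bigr => i _ do rewrite /phat_b mulrA mulr_sumr.
exact: sum_by_block.
Qed.

End Blocks.

Theorem mainTheorem9 (R : realFieldType) (AL AF : finType) (K N : nat) (a0 : AF)
  (u : 'I_K -> AL -> AF -> R)
  (hu : forall i al af, 0 <= u i al af <= 1)
  (b : 'I_K -> {ffun 'I_K -> R}) (lam : {ffun 'I_K -> R} -> 'I_K -> R)
  (hB : barycentric_spanner a0 u b lam)
  (xb : 'I_K -> {ffun AL -> R}) (ab : 'I_K -> AF)
  (hxb : forall i, in_simplex (xb i) /\ b i = indv (sigma_of a0 u (xb i)) (ab i))
  (p : 'I_K -> R) (hp : prob_vec p)
  (hN : (0 < N)%N)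
  (sg : {ffun 'I_K -> AF}) (hsg : in_Sigma a0 u sg) (af : AF) :
  Var p (phat a0 u xb ab N lam (indv sg af)) <= K%:R / N%:R.
Proof.
set w := indv sg af.
have lam_bound i : -1 <= lam w i <= 1 by apply: (hB.2 w _).1; exists sg, af.
have N0 : (N%:R : R) != 0 by rewrite pnatr_eq0 -lt0n.
have sum_rounds : \sum_(t < K * N) N%:R ^- 2 = K%:R / N%:R :> R.
  by rewrite sumr_const card_ord -[_ *+ _]mulr_natr natrM; field.
rewrite -sum_rounds (eq_Var p (phat_by_round hN a0 u xb ab lam w)).
rewrite Var_sum_coord //; apply: ler_sum => t _; apply: variance_le => // k.
exact/round_term_sqr_le/lam_bound.
Qed.
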